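(* Let $W=\mathrm{diag}(w_1,w_2,\dots)$ with $w_n\ge0$ for all $n$ be a diagonal operator such that $-\Delta_1\ge W$ in the sense of quadratic forms, i.e. $\sum_{n=1}^\infty w_n|\psi_n|^2\le\sum_{n=1}^\infty|\psi_{n+1}-\psi_n|^2$ for all $\psi\in\ell^2(\mathbb{N})$. Then $W=0$.
   Context: $\mathbb{N}=\{1,2,\dots\}$. The discrete Neumann Laplacian is $-\Delta_1:=2-J_1$ on $\ell^2(\mathbb{N})$, where $(J_1\psi)_1=\psi_1+\psi_2$ and $(J_1\psi)_n=\psi_{n-1}+\psi_{n+1}$ for $n\ge2$; its quadratic form is $\langle\psi,-\Delta_1\psi\rangle=\sum_{n\ge1}|\psi_{n+1}-\psi_n|^2$. *)

From Stdlib Require Import Reals.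
From Coquelicot Require Import Coquelicot.
Open Scope R_scope.

(* Convention: sequences on N = {1,2,...} are represented by functions
   nat -> _ shifted by one: psi k (k : nat, k >= 0) stands for psi_{k+1}. *)

Definition in_l2 (psi : nat -> C) : Prop :=
  ex_series (fun n => (Cmod (psi n)) ^ 2).

Definition neumann_form (psi : nat -> C) : R :=
  Series (fun n => (Cmod (Cminus (psi (S n)) (psi n))) ^ 2).

Definition diag_form_summand (w : nat -> R) (psi : nat -> C) : nat -> R :=
  fun n => w n * (Cmod (psi n)) ^ 2.

Definition neumann_dominates (w : nat -> R) : Prop :=
  forall psi : nat -> C, in_l2 psi ->
    ex_series (diag_form_summand w psi) /\
    Series (diag_form_summand w psi) <= neumann_form psi.

(* Test the form inequality on the real tent sequences psi_k = max(M - k, 0):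
   their Neumann energy is M, while the weight w_n alone contributes
   w_n (M - n)^2.  Hence w_n (M - n)^2 <= M for every M, which forces
   w_n = 0 as M -> oo. *)

From Stdlib Require Import Reals Lra Lia.
From Coquelicot Require Import Coquelicot.
Open Scope R_scope.

Lemma is_series_finite_support {K : AbsRing} {V : NormedModule K}
  (a : nat -> V) (N : nat) :
  (forall k, (N < k)%nat -> a k = zero) -> is_series a (sum_n a N).
Proof.
  intros Ha. apply filterlim_ext_loc with (fun _ => sum_n a N).
  - exists N. intros k Hk. induction Hk as [|k Hk IH]; [reflexivity|].
    rewrite sum_Sn, <- IH, (Ha (S k)) by lia. now rewrite plus_zero_r.
  - apply filterlim_const.
Qed.

Lemma Series_point (c : R) (n : nat) :
  Series (fun k => if (k =? n)%nat then c else 0) = c.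
Proof.
  set (a := fun k => if (k =? n)%nat then c else 0).
  apply is_series_unique.
  replace c with (sum_n a n) at 1.
  - apply (is_series_finite_support (V := R_NormedModule)). intros k Hk.
    unfold a. now rewrite (proj2 (Nat.eqb_neq k n)) by lia.
  - destruct n as [|n].
    + now rewrite sum_O.
    + rewrite sum_Sn, (sum_n_ext_loc _ (fun _ => 0)), sum_n_const.
      * unfold a. rewrite Nat.eqb_refl. change (INR (S n) * 0 + c = c). ring.
      * intros k Hk. unfold a. now rewrite (proj2 (Nat.eqb_neq k (S n))) by lia.
Qed.

Lemma term_le_Series (a : nat -> R) (n : nat) :
  (forall k, 0 <= a k) -> ex_series a -> a n <= Series a.
Proof.
  intros Ha Hex. rewrite <- (Series_point (a n) n) at 1.
  apply Series_le; [|exact Hex].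
  intros k. destruct (Nat.eqb_spec k n) as [->|_]; split; auto with real.
Qed.

Lemma Cmod_RtoC_pow2 (x : R) : Cmod (RtoC x) ^ 2 = x ^ 2.
Proof. rewrite Cmod_R. apply pow2_abs. Qed.

Lemma neumann_form_real (u : nat -> R) :
  neumann_form (fun k => RtoC (u k)) = Series (fun k => (u (S k) - u k) ^ 2).
Proof.
  apply Series_ext. intros k. now rewrite <- RtoC_minus, Cmod_RtoC_pow2.
Qed.

Lemma diag_form_term_le (w : nat -> R) (psi : nat -> C) (n : nat) :
  (forall k, 0 <= w k) -> neumann_dominates w -> in_l2 psi ->
  w n * Cmod (psi n) ^ 2 <= neumann_form psi.
Proof.
  intros hw hdom Hl2. destruct (hdom psi Hl2) as [Hex Hle].
  eapply Rle_trans; [|exact Hle].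
  apply (term_le_Series (diag_form_summand w psi)); [|exact Hex].
  intros k. apply Rmult_le_pos; [apply hw | apply pow2_ge_0].
Qed.

(* [M - k] is truncated subtraction, so [tent M k = max (M - k) 0]. *)
Definition tent (M k : nat) : R := INR (M - k).

Lemma tent_step_pow2 (M k : nat) :
  (tent M (S k) - tent M k) ^ 2 = if (k <? M)%nat then 1 else 0.
Proof.
  unfold tent. destruct (Nat.ltb_spec k M).
  - replace (M - k)%nat with (S (M - S k)) by lia. rewrite S_INR. ring.
  - replace (M - k)%nat with 0%nat by lia. replace (M - S k)%nat with 0%nat by lia.
    simpl. ring.
Qed.

Lemma tent_in_l2 (M : nat) : in_l2 (fun k => RtoC (tent M k)).
Proof.
  exists (sum_n (fun k => Cmod (RtoC (tent M k)) ^ 2) M).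
  apply (is_series_finite_support (V := R_NormedModule)). intros k Hk.
  rewrite Cmod_RtoC_pow2. unfold tent. replace (M - k)%nat with 0%nat by lia.
  simpl. change (0 * (0 * 1) = 0). ring.
Qed.

Lemma neumann_form_tent (M : nat) :
  neumann_form (fun k => RtoC (tent M k)) = INR M.
Proof.
  rewrite neumann_form_real. rewrite (Series_ext _ _ (tent_step_pow2 M)).
  apply is_series_unique. destruct M as [|m].
  - replace (INR 0) with (sum_n (fun k => if (k <? 0)%nat then 1 else 0) 0)
      by (rewrite sum_O; reflexivity).
    apply (is_series_finite_support (V := R_NormedModule)). reflexivity.
  - replace (INR (S m)) with (sum_n (fun k => if (k <? S m)%nat then 1 else 0) m).
    + apply (is_series_finite_support (V := R_NormedModule)). intros k Hk.
      now rewrite (proj2 (Nat.ltb_ge k (S m))) by lia.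
    + rewrite (sum_n_ext_loc _ (fun _ => 1)), sum_n_const; [apply Rmult_1_r|].
      intros k Hk. now rewrite (proj2 (Nat.ltb_lt k (S m))) by lia.
Qed.

Lemma neumann_dominates_weight_bound (w : nat -> R) (n K : nat) :
  (forall k, 0 <= w k) -> neumann_dominates w ->
  w n * INR K ^ 2 <= INR (n + K).
Proof.
  intros hw hdom.
  replace (INR K) with (tent (n + K) n) by (unfold tent; f_equal; lia).
  rewrite <- neumann_form_tent, <- Cmod_RtoC_pow2.
  exact (diag_form_term_le w _ n hw hdom (tent_in_l2 (n + K))).
Qed.

Theorem theorem4p2 (w : nat -> R) (hw : forall n, 0 <= w n)
  (hdom : neumann_dominates w) : forall n, w n = 0.
Proof.
  intros n. destruct (hw n) as [Hpos|]; [exfalso|auto].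
  destruct (INR_archimed (w n) 2 Hpos) as [N HN].
  set (K := (n + N + 1)%nat).
  pose proof (neumann_dominates_weight_bound w n K hw hdom) as Hbound.
  assert (HNK : INR N <= INR K) by (apply le_INR; unfold K; lia).
  assert (HnK : INR (n + K) <= 2 * INR K).
  { rewrite plus_INR. enough (INR n <= INR K) by lra. apply le_INR. unfold K. lia. }
  assert (HK : 0 < INR K) by (apply lt_0_INR; unfold K; lia).
  assert (HwK : w n * INR K <= 2).
  { apply Rmult_le_reg_r with (INR K); [exact HK|]. simpl in Hbound. nra. }
  nra.
Qed.
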